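(* Let $c$ be the ellipse $x^2/a_c^2+y^2/b_c^2=1$, $a_c>b_c>0$, with numerical eccentricity $m=\sqrt{a_c^2-b_c^2}/a_c$, and let $\mathrm{sn},\mathrm{cn},\mathrm{dn}$ be the Jacobian elliptic functions and $K$ the complete elliptic integral of the first kind with modulus $m$. Then the mapping \[\mathbf Y:\ U\times V\to\mathbb R^2,\quad (\tilde u,\tilde v)\mapsto\left(-a_c\frac{\mathrm{sn}\,\tilde u\ \mathrm{dn}\,\tilde v}{\mathrm{cn}\,\tilde v},\ b_c\frac{\mathrm{cn}\,\tilde u}{\mathrm{cn}\,\tilde v}\right),\quad U=\{\tilde u: 0\le\tilde u<4K\},\ V=\{\tilde v: 0\le\tilde v<K\},\] is injective and parametrizes the exterior of $c$ in such a way that the curves $\tilde u=\text{const}$ are branches of hyperbolas confocal with $c$, the curves $\tilde v=\text{const}$ are ellipses confocal with $c$, and the curves $\tilde u\pm\tilde v=\text{const}$ are tangent lines of $c$.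
   Context: Confocal conics of $c$: $\frac{x^2}{a_c^2+k}+\frac{y^2}{b_c^2+k}=1$, $k\in\mathbb R\setminus\{-a_c^2,-b_c^2\}$. Modulus convention: $\mathrm{sn}\,\tilde u=\sin\varphi$, $\mathrm{cn}\,\tilde u=\cos\varphi$ where $\tilde u=\int_0^\varphi(1-m^2\sin^2\psi)^{-1/2}d\psi$, $\mathrm{dn}=\sqrt{1-m^2\mathrm{sn}^2}$, $K=\int_0^{\pi/2}(1-m^2\sin^2\psi)^{-1/2}d\psi$. *)

From Stdlib Require Import Reals ClassicalEpsilon.
From Coquelicot Require Import Coquelicot.
Open Scope R_scope.

Definition ell_F (m phi : R) : R :=
  RInt (fun psi => / sqrt (1 - m ^ 2 * (sin psi) ^ 2)) 0 phi.

(* Jacobi amplitude: the (unique, for 0 <= m < 1) phi with F(m, phi) = u. *)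
Definition am (m u : R) : R :=
  epsilon (inhabits 0) (fun phi => ell_F m phi = u).

Definition sn (m u : R) : R := sin (am m u).
Definition cn (m u : R) : R := cos (am m u).
Definition dn (m u : R) : R := sqrt (1 - m ^ 2 * (sn m u) ^ 2).

Definition ellK (m : R) : R := ell_F m (PI / 2).

Definition Ymap (a b m u v : R) : R * R :=
  (- a * (sn m u * dn m v / cn m v), b * (cn m u / cn m v)).

Definition on_confocal (a b k : R) (p : R * R) : Prop :=
  fst p ^ 2 / (a ^ 2 + k) + snd p ^ 2 / (b ^ 2 + k) = 1.

Definition on_tangent (a b x0 y0 : R) (p : R * R) : Prop :=
  fst p * x0 / a ^ 2 + snd p * y0 / b ^ 2 = 1.

(* With phi = am u we have sn u = sin phi, cn u = cos phi, and phi runs once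
   over [0, 2 pi) while u runs over [0, 4K).  Since b^2 = a^2 (1 - m^2), for
   k = b^2 sn^2 v / cn^2 v one gets a^2 + k = a^2 dn^2 v / cn^2 v and
   b^2 + k = b^2 / cn^2 v, so for fixed v the point Y(u, v) runs once around
   the confocal ellipse with parameter k.  This k grows from 0 to infinity on
   [0, K), and through a point there passes only one confocal ellipse; this
   gives injectivity and identifies the image with the exterior of c.  The
   same identities put Y(u, .) on the confocal hyperbola with parameter
   (a^2 - b^2) sn^2 u - a^2, on the side given by the sign of sn u.
   The addition theorems for sn and cn (proved by differentiating their right
   hand sides along u + v = const) give
   cn u cn (u + v) + sn u sn (u + v) dn v = cn v, which says that Y(u, v) lies
   on the tangent of c at (- a sn (u + v), b cn (u + v)); the case u - v
   follows since cn and dn are even. *)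

From Stdlib Require Import Reals Ranalysis5 Lra Psatz Nsatz ClassicalEpsilon.
From Coquelicot Require Import Coquelicot.
Open Scope R_scope.

Definition ell_integrand (m x : R) : R := / sqrt (1 - m ^ 2 * sin x ^ 2).

Lemma ell_F_0 m : ell_F m 0 = 0.
Proof. unfold ell_F. rewrite RInt_point. reflexivity. Qed.

Lemma is_derive_0_constant (g : R -> R) :
  (forall x, is_derive g x 0) -> forall x y, g x = g y.
Proof.
  intros Hg x y.
  destruct (MVT_gen g x y (fun _ => 0)) as [c [_ Hc]].
  - intros z _. apply Hg.
  - intros z _. apply continuity_pt_filterlim.
    apply (ex_derive_continuous g z). eexists; apply Hg.
  - lra.
Qed.

Lemma sin_cos_inj_2PI t1 t2 : 0 <= t1 < 2 * PI -> 0 <= t2 < 2 * PI ->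
  sin t1 = sin t2 -> cos t1 = cos t2 -> t1 = t2.
Proof.
  intros H1 H2 Hs Hc.
  assert (Hd : forall d, 0 <= d < 2 * PI -> sin d = 0 -> cos d = 1 -> d = 0).
  { intros d Hd Hsd Hcd. pose proof PI_RGT_0.
    destruct (sin_eq_O_2PI_0 d) as [|[E|E]]; try lra.
    rewrite E, cos_PI in Hcd. lra. }
  pose proof (sin2_cos2 t1) as Hp. unfold Rsqr in Hp.
  destruct (Rle_dec t1 t2).
  - enough (t2 - t1 = 0) by lra. apply Hd; [lra | |].
    + rewrite sin_minus, Hs, Hc. ring.
    + rewrite cos_minus, <- Hs, <- Hc. lra.
  - enough (t1 - t2 = 0) by lra. apply Hd; [lra | |].
    + rewrite sin_minus, Hs, Hc. ring.
    + rewrite cos_minus, <- Hs, <- Hc. lra.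
Qed.

Lemma sin_cos_surj_2PI x y : x ^ 2 + y ^ 2 = 1 ->
  exists t, 0 <= t < 2 * PI /\ sin t = x /\ cos t = y.
Proof.
  intros H. pose proof PI_RGT_0.
  assert (Hy : -1 <= y <= 1) by nra.
  pose proof (acos_bound y) as Hb.
  assert (Hs : sin (acos y) = Rabs x).
  { rewrite sin_acos, <- sqrt_Rsqr_abs by auto. f_equal. unfold Rsqr. lra. }
  destruct (Rle_lt_dec 0 x) as [Hx|Hx].
  - exists (acos y). rewrite Hs, Rabs_right, cos_acos by lra. lra.
  - assert (0 < acos y).
    { destruct (proj1 Hb) as [|E]; auto. rewrite <- E, sin_0 in Hs.
      pose proof (Rabs_pos_lt x). lra. }
    exists (2 * PI - acos y).
    rewrite sin_minus, cos_minus, sin_2PI, cos_2PI, Hs, Rabs_left, cos_acos by lra.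
    repeat split; lra || ring.
Qed.

Lemma sn2_cn2 m u : sn m u ^ 2 + cn m u ^ 2 = 1.
Proof. unfold sn, cn. rewrite <- (sin2_cos2 (am m u)). unfold Rsqr. ring. Qed.

Lemma ratio_constant (f g df dg : R -> R) :
  (forall x, is_derive f x (df x)) -> (forall x, is_derive g x (dg x)) ->
  (forall x, g x <> 0) -> (forall x, df x * g x = f x * dg x) ->
  forall x y, f x / g x = f y / g y.
Proof.
  intros Hf Hg Hg0 Hfg. apply (is_derive_0_constant (fun x => f x / g x)).
  intros x. replace 0 with ((df x * g x - f x * dg x) / g x ^ 2).
  - apply is_derive_div; auto.
  - rewrite Hfg. field. apply Hg0.
Qed.

Section Jacobi.

Variable m : R.
Hypothesis m2_lt_1 : m ^ 2 < 1.

Lemma ell_radicand_pos x : 0 < 1 - m ^ 2 * sin x ^ 2.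
Proof.
  pose proof (SIN_bound x). assert (0 <= m ^ 2) by apply pow2_ge_0.
  assert (sin x ^ 2 <= 1) by nra. nra.
Qed.

Lemma ell_integrand_ge_1 x : 1 <= ell_integrand m x.
Proof.
  unfold ell_integrand. pose proof (ell_radicand_pos x).
  assert (0 <= m ^ 2 * sin x ^ 2) by (apply Rmult_le_pos; apply pow2_ge_0).
  rewrite <- Rinv_1. apply Rinv_le_contravar.
  - apply sqrt_lt_R0. lra.
  - rewrite <- sqrt_1 at 2. apply sqrt_le_1_alt. lra.
Qed.

Lemma ell_integrand_continuous x : continuous (ell_integrand m) x.
Proof.
  apply (ex_derive_continuous (ell_integrand m)). unfold ell_integrand.
  pose proof (ell_radicand_pos x). auto_derive. repeat split; try lra.
  apply Rgt_not_eq, sqrt_lt_R0. lra.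
Qed.

Lemma ex_RInt_ell_integrand x y : ex_RInt (ell_integrand m) x y.
Proof.
  apply (ex_RInt_continuous (V := R_CompleteNormedModule)).
  intros; apply ell_integrand_continuous.
Qed.

Lemma is_derive_ell_F x : is_derive (ell_F m) x (ell_integrand m x).
Proof.
  apply (is_derive_RInt (ell_integrand m) (ell_F m) 0 x).
  - apply filter_forall. intros y.
    apply (RInt_correct (V := R_CompleteNormedModule)), ex_RInt_ell_integrand.
  - apply ell_integrand_continuous.
Qed.

Lemma ell_F_sub_ge x y : x <= y -> y - x <= ell_F m y - ell_F m x.
Proof.
  intros Hxy.
  replace (ell_F m y - ell_F m x) with (RInt (ell_integrand m) x y).
  - apply Rle_trans with (RInt (fun _ => 1) x y).
    + rewrite RInt_const. unfold scal; simpl; unfold mult; simpl. lra.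
    + apply RInt_le; auto.
      * apply ex_RInt_const.
      * apply ex_RInt_ell_integrand.
      * intros; apply ell_integrand_ge_1.
  - change (RInt (ell_integrand m) x y
      = RInt (ell_integrand m) 0 y - RInt (ell_integrand m) 0 x).
    rewrite <- (RInt_Chasles (ell_integrand m) 0 x y)
      by apply ex_RInt_ell_integrand.
    unfold plus; simpl. lra.
Qed.

Lemma Derive_ell_F x : Derive (fun y => ell_F m y) x = ell_integrand m x.
Proof. apply is_derive_unique, is_derive_ell_F. Qed.

Lemma ell_F_neg x : ell_F m (- x) = - ell_F m x.
Proof.
  assert (H : forall y, is_derive (fun y => ell_F m (- y) + ell_F m y) y 0).
  { intros y. auto_derive.
    - repeat split; eexists; apply is_derive_ell_F.
    - rewrite !Derive_ell_F. unfold ell_integrand. rewrite sin_neg.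
      replace ((- sin y) ^ 2) with (sin y ^ 2) by ring. ring. }
  pose proof (is_derive_0_constant _ H x 0) as H0.
  cbv beta in H0. rewrite Ropp_0, ell_F_0 in H0. lra.
Qed.

Lemma ell_F_plus_PI x : ell_F m (x + PI) = ell_F m x + 2 * ellK m.
Proof.
  assert (H : forall y, is_derive (fun y => ell_F m (y + PI) - ell_F m y) y 0).
  { intros y. auto_derive.
    - repeat split; eexists; apply is_derive_ell_F.
    - rewrite !Derive_ell_F. unfold ell_integrand. rewrite neg_sin.
      replace ((- sin y) ^ 2) with (sin y ^ 2) by ring. ring. }
  pose proof (is_derive_0_constant _ H x (- (PI / 2))) as H0.
  cbv beta in H0. replace (- (PI / 2) + PI) with (PI / 2) in H0 by field.
  rewrite ell_F_neg in H0. unfold ellK. lra.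
Qed.

Lemma ell_F_PI : ell_F m PI = 2 * ellK m.
Proof. rewrite <- (Rplus_0_l PI), ell_F_plus_PI, ell_F_0. ring. Qed.

Lemma ell_F_3PI2 : ell_F m (3 * (PI / 2)) = 3 * ellK m.
Proof.
  replace (3 * (PI / 2)) with (PI / 2 + PI) by field.
  rewrite ell_F_plus_PI. unfold ellK. ring.
Qed.

Lemma ell_F_2PI : ell_F m (2 * PI) = 4 * ellK m.
Proof. replace (2 * PI) with (PI + PI) by ring. rewrite ell_F_plus_PI, ell_F_PI. ring. Qed.

Lemma ell_F_lt x y : x < y -> ell_F m x < ell_F m y.
Proof. intros Hxy. pose proof (ell_F_sub_ge x y). lra. Qed.

Lemma ell_F_le_iff x y : ell_F m x <= ell_F m y <-> x <= y.
Proof.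
  split; intros Hxy.
  - destruct (Rle_lt_dec x y) as [|Hyx]; auto. apply ell_F_lt in Hyx. lra.
  - pose proof (ell_F_sub_ge x y Hxy). lra.
Qed.

Lemma ell_F_lt_iff x y : ell_F m x < ell_F m y <-> x < y.
Proof. pose proof (ell_F_le_iff y x). lra. Qed.

Lemma ell_F_inj x y : ell_F m x = ell_F m y -> x = y.
Proof. pose proof (ell_F_le_iff x y). pose proof (ell_F_le_iff y x). lra. Qed.

Lemma ell_F_surj u : exists phi, ell_F m phi = u.
Proof.
  assert (Hlo : ell_F m (- Rabs u) <= u).
  { pose proof (ell_F_sub_ge (- Rabs u) 0). pose proof (Rabs_pos u).
    pose proof (Rle_abs (- u)). rewrite Rabs_Ropp in *. rewrite ell_F_0 in *. lra. }
  assert (Hhi : u <= ell_F m (Rabs u)).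
  { pose proof (ell_F_sub_ge 0 (Rabs u)). pose proof (Rabs_pos u).
    pose proof (Rle_abs u). rewrite ell_F_0 in *. lra. }
  assert (Hcont : continuity (ell_F m)).
  { intros x. apply continuity_pt_filterlim, (ex_derive_continuous (ell_F m)).
    eexists; apply is_derive_ell_F. }
  destruct (IVT_gen (ell_F m) (- Rabs u) (Rabs u) u Hcont) as [phi [_ Hphi]].
  - split; [apply Rle_trans with (ell_F m (- Rabs u)); [apply Rmin_l | auto]
           |apply Rle_trans with (ell_F m (Rabs u)); [auto | apply Rmax_r]].
  - now exists phi.
Qed.

Lemma ell_F_am u : ell_F m (am m u) = u.
Proof. apply (epsilon_spec (inhabits 0) (fun phi => ell_F m phi = u)), ell_F_surj. Qed.

Lemma am_ell_F x : am m (ell_F m x) = x.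
Proof. apply ell_F_inj, ell_F_am. Qed.

Lemma am_le_iff u v : am m u <= am m v <-> u <= v.
Proof. rewrite <- ell_F_le_iff, !ell_F_am. reflexivity. Qed.

Lemma am_inj u v : am m u = am m v -> u = v.
Proof. intros E. rewrite <- (ell_F_am u), E. apply ell_F_am. Qed.

Lemma am_bounds lo hi u : ell_F m lo <= u < ell_F m hi -> lo <= am m u < hi.
Proof.
  intros [Hlo Hhi]. rewrite <- (ell_F_am u) in Hlo, Hhi.
  split; [apply ell_F_le_iff | apply ell_F_lt_iff]; assumption.
Qed.

Lemma am_lipschitz u v : Rabs (am m u - am m v) <= Rabs (u - v).
Proof.
  rewrite <- (ell_F_am u) at 2. rewrite <- (ell_F_am v) at 2.
  destruct (Rle_dec (am m u) (am m v)) as [Huv|Hvu].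
  - pose proof (ell_F_sub_ge _ _ Huv).
    rewrite !Rabs_left1 by lra. lra.
  - pose proof (ell_F_sub_ge (am m v) (am m u) ltac:(lra)).
    rewrite !Rabs_right by lra. lra.
Qed.

Lemma is_derive_am u : is_derive (am m) u (dn m u).
Proof.
  assert (Hcont : continuity_pt (am m) u).
  { intros eps Heps. exists eps. split; auto. intros v [_ Hv].
    apply Rle_lt_trans with (Rabs (v - u)); [apply am_lipschitz | apply Hv]. }
  assert (Hder : forall x, am m (u - 1) <= x <= am m (u + 1) ->
    derivable_pt (ell_F m) x).
  { intros x _. apply ex_derive_Reals_0. eexists; apply is_derive_ell_F. }
  assert (Hmid : am m (u - 1) <= am m u <= am m (u + 1)).
  { rewrite !am_le_iff. lra. }
  assert (HF : derive_pt (ell_F m) (am m u) (Hder (am m u) Hmid)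
               = ell_integrand m (am m u)).
  { apply derive_pt_eq_0, is_derive_Reals, is_derive_ell_F. }
  pose proof (ell_integrand_ge_1 (am m u)).
  apply is_derive_Reals.
  replace (dn m u) with (1 / derive_pt (ell_F m) (am m u) (Hder (am m u) Hmid)).
  - apply (derivable_pt_lim_recip_interv (ell_F m) (am m) (u - 1) (u + 1) u Hder Hcont);
      try lra.
    intros x _. apply ell_F_am.
  - rewrite HF. unfold ell_integrand, dn, sn. field.
    apply Rgt_not_eq, sqrt_lt_R0, ell_radicand_pos.
Qed.

Lemma dn_pos u : 0 < dn m u.
Proof. apply sqrt_lt_R0, ell_radicand_pos. Qed.

Lemma dn2 u : dn m u ^ 2 = 1 - m ^ 2 * sn m u ^ 2.
Proof. apply pow2_sqrt. left; apply ell_radicand_pos. Qed.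

Lemma is_derive_sn u : is_derive (sn m) u (cn m u * dn m u).
Proof.
  pose proof (is_derive_comp sin (am m) u _ _
    (is_derive_sin (am m u)) (is_derive_am u)) as H.
  unfold scal in H; simpl in H; unfold mult in H; simpl in H.
  unfold cn. rewrite Rmult_comm. exact H.
Qed.

Lemma Derive_sn u : Derive (fun x => sn m x) u = cn m u * dn m u.
Proof. apply is_derive_unique, is_derive_sn. Qed.

Lemma is_derive_cn u : is_derive (cn m) u (- sn m u * dn m u).
Proof.
  pose proof (is_derive_comp cos (am m) u _ _
    (is_derive_cos (am m u)) (is_derive_am u)) as H.
  unfold scal in H; simpl in H; unfold mult in H; simpl in H.
  unfold sn. rewrite Rmult_comm. exact H.
Qed.

Lemma Derive_cn u : Derive (fun x => cn m x) u = - sn m u * dn m u.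
Proof. apply is_derive_unique, is_derive_cn. Qed.

Lemma is_derive_dn u : is_derive (dn m) u (- m ^ 2 * sn m u * cn m u).
Proof.
  pose proof (dn_pos u) as Hdn.
  assert (Hr : is_derive (fun x => 1 - m ^ 2 * sn m x ^ 2) u
                 (- m ^ 2 * (2 * sn m u * (cn m u * dn m u)))).
  { auto_derive.
    - eexists; apply is_derive_sn.
    - rewrite Derive_sn. ring. }
  pose proof (is_derive_sqrt _ _ _ Hr (ell_radicand_pos (am m u))) as H.
  fold (sn m u) (dn m u) in H.
  replace (- m ^ 2 * sn m u * cn m u) with
    (- m ^ 2 * (2 * sn m u * (cn m u * dn m u)) / (2 * dn m u)) by (field; lra).
  exact H.
Qed.

Lemma Derive_dn u : Derive (fun x => dn m x) u = - m ^ 2 * sn m u * cn m u.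
Proof. apply is_derive_unique, is_derive_dn. Qed.

Lemma am_0 : am m 0 = 0.
Proof. rewrite <- (ell_F_0 m) at 1. apply am_ell_F. Qed.

Lemma sn_0 : sn m 0 = 0.
Proof. unfold sn. rewrite am_0. apply sin_0. Qed.

Lemma cn_0 : cn m 0 = 1.
Proof. unfold cn. rewrite am_0. apply cos_0. Qed.

Lemma dn_0 : dn m 0 = 1.
Proof. unfold dn. rewrite sn_0. replace (1 - m ^ 2 * 0 ^ 2) with 1 by ring. apply sqrt_1. Qed.

Lemma am_neg u : am m (- u) = - am m u.
Proof. apply ell_F_inj. rewrite ell_F_neg, !ell_F_am. reflexivity. Qed.

Lemma sn_neg u : sn m (- u) = - sn m u.
Proof. unfold sn. rewrite am_neg. apply sin_neg. Qed.

Lemma cn_neg u : cn m (- u) = cn m u.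
Proof. unfold cn. rewrite am_neg. apply cos_neg. Qed.

Lemma dn_neg u : dn m (- u) = dn m u.
Proof. unfold dn. rewrite sn_neg. f_equal. ring. Qed.

Lemma am_bounds_period u : 0 <= u < 4 * ellK m -> 0 <= am m u < 2 * PI.
Proof. intros. apply am_bounds; auto. rewrite ell_F_0, ell_F_2PI; auto. Qed.

Lemma am_bounds_quarter v : 0 <= v < ellK m -> 0 <= am m v < PI / 2.
Proof. intros. apply am_bounds; auto. rewrite ell_F_0. auto. Qed.

Lemma cn_pos_quarter v : 0 <= v < ellK m -> 0 < cn m v.
Proof. intros Hv. apply am_bounds_quarter in Hv. apply cos_gt_0; lra. Qed.

Lemma sn_nonneg_quarter v : 0 <= v < ellK m -> 0 <= sn m v.
Proof.
  intros Hv. apply am_bounds_quarter in Hv. pose proof PI_RGT_0.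
  apply sin_ge_0; lra.
Qed.

Lemma sn_cn_inj_period u1 u2 :
  0 <= u1 < 4 * ellK m -> 0 <= u2 < 4 * ellK m ->
  sn m u1 = sn m u2 -> cn m u1 = cn m u2 -> u1 = u2.
Proof.
  intros H1 H2 Hs Hc. apply am_inj, sin_cos_inj_2PI; auto using am_bounds_period.
Qed.

Lemma sn_cn_surj_period x y : x ^ 2 + y ^ 2 = 1 ->
  exists u, 0 <= u < 4 * ellK m /\ sn m u = x /\ cn m u = y.
Proof.
  intros H. destruct (sin_cos_surj_2PI x y H) as [t [Ht [Hs Hc]]].
  exists (ell_F m t). unfold sn, cn. rewrite am_ell_F by auto.
  rewrite <- (ell_F_0 m), <- ell_F_2PI.
  rewrite ell_F_le_iff, ell_F_lt_iff. auto.
Qed.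

Lemma sn_eq_0_period u : 0 <= u < 4 * ellK m -> sn m u = 0 ->
  u = 0 \/ u = 2 * ellK m.
Proof.
  intros Hu Hs. apply am_bounds_period in Hu.
  rewrite <- (ell_F_am u), <- ell_F_PI, <- (ell_F_0 m).
  destruct (sin_eq_O_2PI_0 (am m u)) as [E|[E|E]]; auto; try lra.
  all: rewrite E; auto.
Qed.

Lemma cn_eq_0_period u : 0 <= u < 4 * ellK m -> cn m u = 0 ->
  u = ellK m \/ u = 3 * ellK m.
Proof.
  intros Hu Hc. apply am_bounds_period in Hu.
  rewrite <- (ell_F_am u), <- ell_F_3PI2.
  destruct (cos_eq_0_2PI_0 (am m u)) as [E|E]; auto; try lra.
  all: rewrite E; auto.
Qed.

Lemma sn_div_cn_inj_quarter v1 v2 : 0 <= v1 < ellK m -> 0 <= v2 < ellK m ->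
  sn m v1 / cn m v1 = sn m v2 / cn m v2 -> v1 = v2.
Proof.
  intros H1 H2 Ht. apply am_bounds_quarter in H1, H2. apply am_inj.
  rewrite <- (atan_tan (am m v1)), <- (atan_tan (am m v2)) by lra.
  f_equal. exact Ht.
Qed.

Lemma sn_div_cn_surj_quarter t : 0 <= t ->
  exists v, 0 <= v < ellK m /\ sn m v / cn m v = t.
Proof.
  intros Ht. pose proof (atan_bound t).
  assert (0 <= atan t).
  { rewrite <- atan_0. destruct Ht as [Ht|<-]; [|lra].
    left. apply atan_increasing, Ht. }
  exists (ell_F m (atan t)). unfold sn, cn. rewrite am_ell_F.
  split; [|apply tan_atan].
  unfold ellK. rewrite <- (ell_F_0 m), ell_F_le_iff, ell_F_lt_iff. lra.
Qed.

Ltac ex_derive_jacobi :=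
  repeat match goal with
  | |- _ /\ _ => split
  | |- True => exact I
  | |- ex_derive (fun _ => sn m _) _ => eexists; apply is_derive_sn
  | |- ex_derive (fun _ => cn m _) _ => eexists; apply is_derive_cn
  | |- ex_derive (fun _ => dn m _) _ => eexists; apply is_derive_dn
  end.

(* Identities modulo sn^2 + cn^2 = 1 and dn^2 = 1 - m^2 sn^2 at two points;
   [nsatz] needs the Jacobi values abstracted into variables, and no other
   hypothesis in the context may mention them. *)
Ltac jacobi_nsatz u v :=
  pose proof (sn2_cn2 m u); pose proof (sn2_cn2 m v);
  pose proof (dn2 u); pose proof (dn2 v);
  generalize dependent (sn m u); generalize dependent (cn m u);
  generalize dependent (dn m u); generalize dependent (sn m v);
  generalize dependent (cn m v); generalize dependent (dn m v);
  intros; simpl in *; nsatz.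

Lemma jacobi_den_pos u v : 0 < 1 - m ^ 2 * sn m u ^ 2 * sn m v ^ 2.
Proof.
  pose proof (sn2_cn2 m u). pose proof (sn2_cn2 m v).
  pose proof (pow2_ge_0 (cn m u)). pose proof (pow2_ge_0 (cn m v)).
  pose proof (pow2_ge_0 (sn m u)). pose proof (pow2_ge_0 (sn m v)).
  assert (sn m u ^ 2 * sn m v ^ 2 <= 1) by nra. nra.
Qed.

Section Addition.

Variable s : R.

Lemma is_derive_sn_plus_num x :
  is_derive (fun u => sn m u * cn m (s - u) * dn m (s - u) + sn m (s - u) * cn m u * dn m u) x
    (2 * m ^ 2 * sn m x * sn m (s - x) * (sn m x ^ 2 - sn m (s - x) ^ 2)).
Proof.
  auto_derive; [ex_derive_jacobi|].
  rewrite !Derive_sn, !Derive_cn, !Derive_dn.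
  replace (s + - x) with (s - x) by ring. jacobi_nsatz x (s - x).
Qed.

Lemma is_derive_cn_plus_num x :
  is_derive (fun u => cn m u * cn m (s - u) - sn m u * sn m (s - u) * dn m u * dn m (s - u)) x
    (2 * m ^ 2 * sn m x * sn m (s - x) *
     (sn m x * cn m x * dn m (s - x) - sn m (s - x) * cn m (s - x) * dn m x)).
Proof.
  auto_derive; [ex_derive_jacobi|].
  rewrite !Derive_sn, !Derive_cn, !Derive_dn.
  replace (s + - x) with (s - x) by ring. jacobi_nsatz x (s - x).
Qed.

Lemma is_derive_plus_den x :
  is_derive (fun u => 1 - m ^ 2 * sn m u ^ 2 * sn m (s - u) ^ 2) x
    (2 * m ^ 2 * sn m x * sn m (s - x) *
     (sn m x * cn m (s - x) * dn m (s - x) - sn m (s - x) * cn m x * dn m x)).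
Proof.
  auto_derive; [ex_derive_jacobi|].
  rewrite !Derive_sn.
  replace (s + - x) with (s - x) by ring. ring.
Qed.

Lemma sn_plus_sub u :
  sn m s = (sn m u * cn m (s - u) * dn m (s - u) + sn m (s - u) * cn m u * dn m u)
           / (1 - m ^ 2 * sn m u ^ 2 * sn m (s - u) ^ 2).
Proof.
  rewrite (ratio_constant _ _ _ _ is_derive_sn_plus_num is_derive_plus_den) with (y := 0).
  - rewrite Rminus_0_r, sn_0, cn_0, dn_0. field.
  - intros x. apply Rgt_not_eq, jacobi_den_pos.
  - intros x. jacobi_nsatz x (s - x).
Qed.

Lemma cn_plus_sub u :
  cn m s = (cn m u * cn m (s - u) - sn m u * sn m (s - u) * dn m u * dn m (s - u))
           / (1 - m ^ 2 * sn m u ^ 2 * sn m (s - u) ^ 2).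
Proof.
  rewrite (ratio_constant _ _ _ _ is_derive_cn_plus_num is_derive_plus_den) with (y := 0).
  - rewrite Rminus_0_r, sn_0, cn_0, dn_0. field.
  - intros x. apply Rgt_not_eq, jacobi_den_pos.
  - intros x. jacobi_nsatz x (s - x).
Qed.

End Addition.

Lemma sn_plus u v :
  sn m (u + v) = (sn m u * cn m v * dn m v + sn m v * cn m u * dn m u)
                 / (1 - m ^ 2 * sn m u ^ 2 * sn m v ^ 2).
Proof. rewrite (sn_plus_sub (u + v) u). replace (u + v - u) with v by ring. reflexivity. Qed.

Lemma cn_plus u v :
  cn m (u + v) = (cn m u * cn m v - sn m u * sn m v * dn m u * dn m v)
                 / (1 - m ^ 2 * sn m u ^ 2 * sn m v ^ 2).
Proof. rewrite (cn_plus_sub (u + v) u). replace (u + v - u) with v by ring. reflexivity. Qed.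

Lemma cn_plus_tangent u v :
  cn m u * cn m (u + v) + sn m u * sn m (u + v) * dn m v = cn m v.
Proof.
  pose proof (jacobi_den_pos u v) as Hden.
  rewrite sn_plus, cn_plus. field_simplify_eq; [clear Hden; jacobi_nsatz u v | lra].
Qed.

End Jacobi.

Lemma on_confocal_unique a b k1 k2 p : b ^ 2 <= a ^ 2 ->
  - b ^ 2 < k1 -> - b ^ 2 < k2 ->
  on_confocal a b k1 p -> on_confocal a b k2 p -> k1 = k2.
Proof.
  destruct p as [x y]. unfold on_confocal; cbn [fst snd]. intros Hab H1 H2 E1 E2.
  set (X := x ^ 2 / ((a ^ 2 + k1) * (a ^ 2 + k2))).
  set (Y := y ^ 2 / ((b ^ 2 + k1) * (b ^ 2 + k2))).
  assert (HX : 0 <= X).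
  { apply Rmult_le_pos; [apply pow2_ge_0 | left; apply Rinv_0_lt_compat; nra]. }
  assert (HY : 0 <= Y).
  { apply Rmult_le_pos; [apply pow2_ge_0 | left; apply Rinv_0_lt_compat; nra]. }
  assert (HE : (k2 - k1) * (X + Y) = 0).
  { rewrite <- (Rminus_diag_eq _ _ (eq_trans E1 (eq_sym E2))).
    unfold X, Y. field. repeat split; lra. }
  destruct (Rmult_integral _ _ HE) as [|HS]; [lra | exfalso].
  replace (x ^ 2 / (a ^ 2 + k1) + y ^ 2 / (b ^ 2 + k1))
    with ((a ^ 2 + k2) * X + (b ^ 2 + k2) * Y) in E1
    by (unfold X, Y; field; repeat split; lra).
  replace X with 0 in E1 by lra. replace Y with 0 in E1 by lra. lra.
Qed.

Lemma exterior_on_confocal a b p : 0 < b -> b < a ->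
  fst p ^ 2 / a ^ 2 + snd p ^ 2 / b ^ 2 >= 1 ->
  exists k, 0 <= k /\ on_confocal a b k p.
Proof.
  destruct p as [x y]. unfold on_confocal; cbn [fst snd]. intros Hb Hab H.
  set (B := a ^ 2 + b ^ 2 - x ^ 2 - y ^ 2).
  set (C := a ^ 2 * b ^ 2 - x ^ 2 * b ^ 2 - y ^ 2 * a ^ 2).
  assert (HC : C <= 0).
  { replace C with (- (a ^ 2 * b ^ 2) * (x ^ 2 / a ^ 2 + y ^ 2 / b ^ 2 - 1))
      by (unfold C; field; lra).
    assert (0 < a ^ 2 * b ^ 2) by (apply Rmult_lt_0_compat; nra). nra. }
  assert (Hdisc : 0 <= B ^ 2 - 4 * C) by nra.
  pose proof (pow2_sqrt _ Hdisc) as Hsq. pose proof (sqrt_pos (B ^ 2 - 4 * C)).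
  (* the larger root of (a^2 + k) (b^2 + k) = x^2 (b^2 + k) + y^2 (a^2 + k) *)
  set (k := (- B + sqrt (B ^ 2 - 4 * C)) / 2).
  assert (Hk : 0 <= k) by (unfold k; nra).
  exists k. split; [exact Hk|].
  assert (Hroot : k ^ 2 + B * k + C = 0) by (unfold k; nra).
  field_simplify_eq.
  - unfold B, C in Hroot. lra.
  - split; nra.
Qed.

Definition ellipse_k (b m v : R) : R := b ^ 2 * (sn m v / cn m v) ^ 2.

Definition hyperbola_k (a b m u : R) : R := (a ^ 2 - b ^ 2) * sn m u ^ 2 - a ^ 2.

Lemma Ymap_neg_r a b m u v : m ^ 2 < 1 -> Ymap a b m u (- v) = Ymap a b m u v.
Proof. intros Hm. unfold Ymap. rewrite cn_neg, dn_neg by auto. reflexivity. Qed.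

Lemma tangent_point_on_ellipse a b m s : 0 < a -> 0 < b ->
  (- a * sn m s) ^ 2 / a ^ 2 + (b * cn m s) ^ 2 / b ^ 2 = 1.
Proof. intros. rewrite <- (sn2_cn2 m s). field. split; lra. Qed.

Section Geometry.

Variables a b m : R.
Hypothesis b_pos : 0 < b.
Hypothesis b_lt_a : b < a.
Hypothesis m2_lt_1 : m ^ 2 < 1.
Hypothesis eccentricity : a ^ 2 * (1 - m ^ 2) = b ^ 2.

Lemma ellipse_k_a v : cn m v <> 0 ->
  a ^ 2 + ellipse_k b m v = a ^ 2 * dn m v ^ 2 / cn m v ^ 2.
Proof.
  intros Hc. unfold ellipse_k. rewrite (dn2 m m2_lt_1), <- eccentricity.
  pose proof (sn2_cn2 m v). field_simplify_eq; [|auto].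
  replace (cn m v ^ 2) with (1 - sn m v ^ 2) by lra. ring.
Qed.

Lemma ellipse_k_b v : cn m v <> 0 ->
  b ^ 2 + ellipse_k b m v = b ^ 2 / cn m v ^ 2.
Proof.
  intros Hc. unfold ellipse_k.
  pose proof (sn2_cn2 m v). field_simplify_eq; [|auto].
  replace (sn m v ^ 2) with (1 - cn m v ^ 2) by lra. ring.
Qed.

Lemma ellipse_k_nonneg v : 0 <= ellipse_k b m v.
Proof. apply Rmult_le_pos; apply pow2_ge_0. Qed.

Lemma ellipse_k_inj v1 v2 : 0 <= v1 < ellK m -> 0 <= v2 < ellK m ->
  ellipse_k b m v1 = ellipse_k b m v2 -> v1 = v2.
Proof.
  intros H1 H2 E. apply (sn_div_cn_inj_quarter m m2_lt_1); auto.
  pose proof (cn_pos_quarter m m2_lt_1 v1 H1). pose proof (sn_nonneg_quarter m m2_lt_1 v1 H1).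
  pose proof (cn_pos_quarter m m2_lt_1 v2 H2). pose proof (sn_nonneg_quarter m m2_lt_1 v2 H2).
  unfold ellipse_k in E. apply Rsqr_inj.
  - apply Rdiv_le_0_compat; lra.
  - apply Rdiv_le_0_compat; lra.
  - rewrite !Rsqr_pow2. apply (Rmult_eq_reg_l (b ^ 2)); [exact E | nra].
Qed.

Lemma ellipse_k_surj k : 0 <= k ->
  exists v, 0 <= v < ellK m /\ ellipse_k b m v = k.
Proof.
  intros Hk.
  destruct (sn_div_cn_surj_quarter m m2_lt_1 (sqrt k / b)) as [v [Hv E]].
  { apply Rdiv_le_0_compat; [apply sqrt_pos | lra]. }
  exists v. split; auto. unfold ellipse_k. rewrite E.
  replace (b ^ 2 * (sqrt k / b) ^ 2) with (sqrt k ^ 2) by (field; lra).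
  apply pow2_sqrt, Hk.
Qed.

Lemma Ymap_on_confocal_ellipse u v : 0 <= v < ellK m ->
  on_confocal a b (ellipse_k b m v) (Ymap a b m u v).
Proof.
  intros Hv. pose proof (cn_pos_quarter m m2_lt_1 v Hv). pose proof (dn_pos m m2_lt_1 v).
  unfold on_confocal, Ymap; cbn [fst snd].
  rewrite ellipse_k_a, ellipse_k_b by lra.
  rewrite <- (sn2_cn2 m u). field. repeat split; lra.
Qed.

Lemma confocal_ellipse_Ymap v p : 0 <= v < ellK m ->
  on_confocal a b (ellipse_k b m v) p ->
  exists u, 0 <= u < 4 * ellK m /\ Ymap a b m u v = p.
Proof.
  intros Hv H. pose proof (cn_pos_quarter m m2_lt_1 v Hv). pose proof (dn_pos m m2_lt_1 v).
  destruct p as [x y]. unfold on_confocal in H; cbn [fst snd] in H.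
  rewrite ellipse_k_a, ellipse_k_b in H by lra.
  destruct (sn_cn_surj_period m m2_lt_1 (- x * cn m v / (a * dn m v)) (y * cn m v / b))
    as [u [Hu [Hs Hc]]].
  { rewrite <- H. field. repeat split; lra. }
  exists u. split; auto. unfold Ymap. rewrite Hs, Hc. f_equal; field; repeat split; lra.
Qed.

Lemma Ymap_inverse u v : 0 <= v < ellK m ->
  sn m u = - fst (Ymap a b m u v) * cn m v / (a * dn m v) /\
  cn m u = snd (Ymap a b m u v) * cn m v / b.
Proof.
  intros Hv. pose proof (cn_pos_quarter m m2_lt_1 v Hv). pose proof (dn_pos m m2_lt_1 v).
  unfold Ymap; cbn [fst snd]. split; field; repeat split; lra.
Qed.

Lemma Ymap_inj u1 v1 u2 v2 :
  0 <= u1 < 4 * ellK m -> 0 <= v1 < ellK m -> 0 <= u2 < 4 * ellK m -> 0 <= v2 < ellK m ->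
  Ymap a b m u1 v1 = Ymap a b m u2 v2 -> u1 = u2 /\ v1 = v2.
Proof.
  intros Hu1 Hv1 Hu2 Hv2 E.
  assert (Ev : v1 = v2).
  { apply ellipse_k_inj; auto.
    apply (on_confocal_unique a b _ _ (Ymap a b m u1 v1)).
    - nra.
    - pose proof (ellipse_k_nonneg v1). nra.
    - pose proof (ellipse_k_nonneg v2). nra.
    - apply Ymap_on_confocal_ellipse, Hv1.
    - rewrite E. apply Ymap_on_confocal_ellipse, Hv2. }
  subst v2. split; auto.
  destruct (Ymap_inverse u1 v1 Hv1) as [Hs1 Hc1].
  destruct (Ymap_inverse u2 v1 Hv1) as [Hs2 Hc2].
  apply (sn_cn_inj_period m m2_lt_1); auto.
  - rewrite Hs1, Hs2, E. reflexivity.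
  - rewrite Hc1, Hc2, E. reflexivity.
Qed.

Lemma Ymap_ellipse_form u v : 0 <= v < ellK m ->
  fst (Ymap a b m u v) ^ 2 / a ^ 2 + snd (Ymap a b m u v) ^ 2 / b ^ 2
  = (1 - m ^ 2 * sn m u ^ 2 * sn m v ^ 2) / cn m v ^ 2.
Proof.
  intros Hv. pose proof (cn_pos_quarter m m2_lt_1 v Hv).
  pose proof (sn2_cn2 m u). pose proof (dn2 m m2_lt_1 v) as Hdn.
  unfold Ymap; cbn [fst snd]. field_simplify_eq; [|repeat split; lra].
  rewrite Hdn. replace (cn m u ^ 2) with (1 - sn m u ^ 2) by lra. ring.
Qed.

Lemma Ymap_exterior u v : 0 <= v < ellK m ->
  fst (Ymap a b m u v) ^ 2 / a ^ 2 + snd (Ymap a b m u v) ^ 2 / b ^ 2 >= 1.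
Proof.
  intros Hv. rewrite Ymap_ellipse_form by auto.
  pose proof (cn_pos_quarter m m2_lt_1 v Hv).
  pose proof (sn2_cn2 m u). pose proof (sn2_cn2 m v).
  pose proof (pow2_ge_0 (sn m v)). pose proof (pow2_ge_0 (cn m u)).
  assert (m ^ 2 * sn m u ^ 2 * sn m v ^ 2 <= sn m v ^ 2).
  { pose proof (pow2_ge_0 m). assert (m ^ 2 * sn m u ^ 2 <= 1) by nra. nra. }
  apply Rle_ge, (Rmult_le_reg_r (cn m v ^ 2)); [nra|].
  unfold Rdiv. rewrite Rmult_assoc, Rinv_l by nra. lra.
Qed.

Lemma Ymap_on_confocal_hyperbola u v : cn m v <> 0 -> sn m u <> 0 -> cn m u <> 0 ->
  on_confocal a b (hyperbola_k a b m u) (Ymap a b m u v).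
Proof.
  intros Hcv Hsu Hcu. pose proof (sn2_cn2 m u). pose proof (sn2_cn2 m v).
  pose proof (dn2 m m2_lt_1 v) as Hdn. pose proof (dn_pos m m2_lt_1 v).
  assert (0 < a ^ 2 - b ^ 2) by nra.
  unfold on_confocal, Ymap, hyperbola_k; cbn [fst snd].
  replace (a ^ 2 + ((a ^ 2 - b ^ 2) * sn m u ^ 2 - a ^ 2))
    with ((a ^ 2 - b ^ 2) * sn m u ^ 2) by ring.
  replace (b ^ 2 + ((a ^ 2 - b ^ 2) * sn m u ^ 2 - a ^ 2))
    with (- ((a ^ 2 - b ^ 2) * cn m u ^ 2)) by nra.
  assert (Hnum : a ^ 2 * dn m v ^ 2 - b ^ 2 = (a ^ 2 - b ^ 2) * cn m v ^ 2).
  { rewrite Hdn, <- eccentricity. replace (cn m v ^ 2) with (1 - sn m v ^ 2) by lra. ring. }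
  transitivity ((a ^ 2 * dn m v ^ 2 - b ^ 2) / ((a ^ 2 - b ^ 2) * cn m v ^ 2)).
  - field. repeat split; lra.
  - rewrite Hnum. field. split; lra.
Qed.

Lemma hyperbola_k_bounds u : sn m u <> 0 -> cn m u <> 0 ->
  - a ^ 2 < hyperbola_k a b m u < - b ^ 2.
Proof.
  intros Hs Hc. unfold hyperbola_k. pose proof (sn2_cn2 m u).
  pose proof (pow2_gt_0 _ Hs). pose proof (pow2_gt_0 _ Hc).
  assert (0 < a ^ 2 - b ^ 2) by nra. split; nra.
Qed.

Lemma Ymap_fst_sign u v : 0 <= v < ellK m -> sn m u <> 0 ->
  0 < - sn m u * fst (Ymap a b m u v).
Proof.
  intros Hv Hs. pose proof (cn_pos_quarter m m2_lt_1 v Hv). pose proof (dn_pos m m2_lt_1 v).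
  pose proof (pow2_gt_0 _ Hs).
  unfold Ymap; cbn [fst snd].
  replace (- sn m u * (- a * (sn m u * dn m v / cn m v))) with (a * sn m u ^ 2 * dn m v / cn m v)
    by (field; lra).
  apply Rdiv_lt_0_compat; [apply Rmult_lt_0_compat; [nra|] |]; lra.
Qed.

Lemma Ymap_on_tangent u v : cn m v <> 0 ->
  on_tangent a b (- a * sn m (u + v)) (b * cn m (u + v)) (Ymap a b m u v).
Proof.
  intros Hcv. unfold on_tangent, Ymap; cbn [fst snd].
  transitivity ((cn m u * cn m (u + v) + sn m u * sn m (u + v) * dn m v) / cn m v).
  - field. repeat split; lra.
  - rewrite cn_plus_tangent by auto. field. exact Hcv.
Qed.

Lemma Ymap_image_exterior p :
  (exists u v, 0 <= u < 4 * ellK m /\ 0 <= v < ellK m /\ Ymap a b m u v = p) <->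
  fst p ^ 2 / a ^ 2 + snd p ^ 2 / b ^ 2 >= 1.
Proof.
  split.
  - intros [u [v [Hu [Hv <-]]]]. apply Ymap_exterior, Hv.
  - intros Hp. destruct (exterior_on_confocal a b p b_pos b_lt_a Hp) as [k [Hk Hkp]].
    destruct (ellipse_k_surj k Hk) as [v [Hv <-]].
    destruct (confocal_ellipse_Ymap v p Hv Hkp) as [u [Hu E]].
    exists u, v. auto.
Qed.

Lemma Ymap_hyperbola_branch u : 0 <= u < 4 * ellK m ->
  u <> 0 -> u <> ellK m -> u <> 2 * ellK m -> u <> 3 * ellK m ->
  - a ^ 2 < hyperbola_k a b m u < - b ^ 2 /\
  exists sg, (sg = 1 \/ sg = -1) /\
    forall v, 0 <= v < ellK m ->
      on_confocal a b (hyperbola_k a b m u) (Ymap a b m u v) /\ 0 < sg * fst (Ymap a b m u v).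
Proof.
  intros Hu H0 HK H2K H3K.
  assert (Hs : sn m u <> 0)
    by (intros E; destruct (sn_eq_0_period m m2_lt_1 u Hu E); auto).
  assert (Hc : cn m u <> 0)
    by (intros E; destruct (cn_eq_0_period m m2_lt_1 u Hu E); auto).
  split; [apply hyperbola_k_bounds; auto|].
  exists (if Rlt_dec 0 (sn m u) then -1 else 1).
  split; [destruct (Rlt_dec 0 (sn m u)); auto|].
  intros v Hv. split.
  - apply Ymap_on_confocal_hyperbola; auto.
    apply Rgt_not_eq, cn_pos_quarter; auto.
  - pose proof (Ymap_fst_sign u v Hv Hs). destruct (Rlt_dec 0 (sn m u)); nra.
Qed.

Lemma Ymap_coordinate_ellipse v p : 0 <= v < ellK m ->
  (exists u, 0 <= u < 4 * ellK m /\ Ymap a b m u v = p) <->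
  on_confocal a b (ellipse_k b m v) p.
Proof.
  intros Hv. split.
  - intros [u [Hu <-]]. apply Ymap_on_confocal_ellipse, Hv.
  - apply confocal_ellipse_Ymap, Hv.
Qed.

Lemma Ymap_on_tangent_minus u v : cn m v <> 0 ->
  on_tangent a b (- a * sn m (u - v)) (b * cn m (u - v)) (Ymap a b m u v).
Proof.
  intros Hcv. rewrite <- Ymap_neg_r by auto.
  apply Ymap_on_tangent. rewrite cn_neg; auto.
Qed.

End Geometry.

Lemma eccentricity_eq a b : 0 < b -> b < a ->
  a ^ 2 * (1 - (sqrt (a ^ 2 - b ^ 2) / a) ^ 2) = b ^ 2.
Proof.
  intros Hb Hab. replace ((sqrt (a ^ 2 - b ^ 2) / a) ^ 2) with (sqrt (a ^ 2 - b ^ 2) ^ 2 / a ^ 2)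
    by (field; lra).
  rewrite pow2_sqrt by nra. field. lra.
Qed.

Lemma eccentricity_lt_1 a b : 0 < b -> b < a -> (sqrt (a ^ 2 - b ^ 2) / a) ^ 2 < 1.
Proof. intros Hb Hab. pose proof (eccentricity_eq a b Hb Hab). nra. Qed.

Theorem theorem3 (a b : R) (hb : 0 < b) (hab : b < a) :
  let m := sqrt (a ^ 2 - b ^ 2) / a in
  let Y := Ymap a b m in
  let inU := fun u => 0 <= u < 4 * ellK m in
  let inV := fun v => 0 <= v < ellK m in
  (* injectivity on U x V *)
  (forall u1 v1 u2 v2, inU u1 -> inV v1 -> inU u2 -> inV v2 ->
     Y u1 v1 = Y u2 v2 -> u1 = u2 /\ v1 = v2) /\
  (* the image is the (closed) exterior of c *)
  (forall p : R * R,
     (exists u v, inU u /\ inV v /\ Y u v = p) <->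
     fst p ^ 2 / a ^ 2 + snd p ^ 2 / b ^ 2 >= 1) /\
  (* u~ = const (non-degenerate values): inside one branch of a confocal hyperbola *)
  (forall u, inU u -> u <> 0 -> u <> ellK m -> u <> 2 * ellK m -> u <> 3 * ellK m ->
     exists k, - a ^ 2 < k < - b ^ 2 /\
     exists sg, (sg = 1 \/ sg = -1) /\
       forall v, inV v -> on_confocal a b k (Y u v) /\ 0 < sg * fst (Y u v)) /\
  (* v~ = const: a (whole) ellipse confocal with c *)
  (forall v, inV v ->
     exists k, - b ^ 2 < k /\
       forall p : R * R, (exists u, inU u /\ Y u v = p) <-> on_confocal a b k p) /\
  (* u~ + v~ = const: contained in a tangent line of c *)
  (forall s, exists x0 y0, x0 ^ 2 / a ^ 2 + y0 ^ 2 / b ^ 2 = 1 /\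
     forall u v, inU u -> inV v -> u + v = s -> on_tangent a b x0 y0 (Y u v)) /\
  (* u~ - v~ = const: contained in a tangent line of c *)
  (forall s, exists x0 y0, x0 ^ 2 / a ^ 2 + y0 ^ 2 / b ^ 2 = 1 /\
     forall u v, inU u -> inV v -> u - v = s -> on_tangent a b x0 y0 (Y u v)).
Proof.
  intros m Y inU inV.
  pose proof (eccentricity_lt_1 a b hb hab) as Hm.
  pose proof (eccentricity_eq a b hb hab) as Hmab. fold m in Hm, Hmab.
  assert (Hcn : forall v, inV v -> cn m v <> 0)
    by (intros v Hv; apply Rgt_not_eq, cn_pos_quarter; auto).
  split; [|split; [|split; [|split; [|split]]]].
  - intros u1 v1 u2 v2. apply Ymap_inj; auto.
  - intros p. apply Ymap_image_exterior; auto.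
  - intros u Hu H0 HK H2K H3K. exists (hyperbola_k a b m u).
    apply Ymap_hyperbola_branch; auto.
  - intros v Hv. exists (ellipse_k b m v).
    split; [pose proof (ellipse_k_nonneg b m v); nra|].
    intros p. apply Ymap_coordinate_ellipse; auto.
  - intros s. exists (- a * sn m s), (b * cn m s).
    split; [apply tangent_point_on_ellipse; lra|].
    intros u v Hu Hv <-. apply Ymap_on_tangent; auto.
  - intros s. exists (- a * sn m s), (b * cn m s).
    split; [apply tangent_point_on_ellipse; lra|].
    intros u v Hu Hv <-. apply Ymap_on_tangent_minus; auto.
Qed.
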